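(* Let $L\subset\mathbb{N}^2$ be a simple planar distributive lattice of rank $d+1$, and let $\lambda$ be the edge-labeling described in the context. Then $\lambda$ is an EL-labeling of $L$.
   Context: $\mathbb{N}^2$ is ordered componentwise. A planar distributive lattice is a finite sublattice $L$ of $\mathbb{N}^2$ with $(0,0)\in L$ such that for any $(i,j)\le(k,\ell)$ in $L$ there is a chain in $L$ from $(i,j)$ to $(k,\ell)$ in which the coordinate sum increases by exactly $1$ at each step; so every covering in $L$ is a horizontal or vertical unit step. $L$ is simple if it has no cut edge (a pair $(a,b)$, $\operatorname{rank} b=\operatorname{rank} a+1$, with $a$ the unique element of its rank and $b$ the unique element of its rank). Let $\mathfrak{c}_0: x_0<\dots<x_{d+1}$, $x_t=(i_t,j_t)$, be the maximal chain with $x_0=(0,0)$, $x_{d+1}=\max L$, such that for every $(k,\ell)\in L$ with $k=i_t$ for some $t$, $\ell\le j_t$. Labeling $\lambda$: the edge $x_t\to x_{t+1}$ gets label $t+1$; if $i_{t+1}=i_t+1$ then all edges $(i_t,j)\to(i_{t+1},j)$ of $L$ get label $t+1$; if $j_{t+1}=j_t+1$ then all edges $(i,j_t)\to(i,j_{t+1})$ of $L$ get label $t+1$. A chain $z_0\to\dots\to z_k$ (each $z_{s+1}$ covering $z_s$) is labeled by $(\lambda(z_0\to z_1),\dots,\lambda(z_{k-1}\to z_k))$, compared lexicographically. An edge-labeling is an EL-labeling if for every interval $[x,y]$ of $L$: (i) there is a unique maximal chain $x=z_0\to\dots\to z_k=y$ of $[x,y]$ with weakly increasing labels, and (ii) every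 other maximal chain of $[x,y]$ has label tuple lexicographically strictly larger than that chain's. *)

From mathcomp Require Import all_boot all_order.
Set Implicit Arguments. Unset Strict Implicit. Unset Printing Implicit Defensive.

Definition pt := (nat * nat)%type.

Definition le2 (a b : pt) : bool := (a.1 <= b.1) && (a.2 <= b.2).
Definition lt2 (a b : pt) : bool := le2 a b && (a != b).

Definition rk (a : pt) : nat := a.1 + a.2.

Definition unit_step (a b : pt) : bool :=
  (b == (a.1.+1, a.2)) || (b == (a.1, a.2.+1)).

(* A finite subset L of N^2 (given by a list; only membership matters) is a
   planar distributive lattice. *)
Definition planar_distr_lattice (L : seq pt) : Prop :=
  [/\ (0, 0) \in L,
      (forall a b, a \in L -> b \in L -> (minn a.1 b.1, minn a.2 b.2) \in L),
      (forall a b, a \in L -> b \in L -> (maxn a.1 b.1, maxn a.2 b.2) \in L)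
    & (forall a b, a \in L -> b \in L -> le2 a b ->
         exists s : seq pt, [/\ path unit_step a s, last a s = b & all (mem L) s])].

Definition cut_edge (L : seq pt) (a b : pt) : Prop :=
  [/\ a \in L, b \in L, rk b = (rk a).+1,
      (forall c, c \in L -> rk c = rk a -> c = a)
    & (forall c, c \in L -> rk c = rk b -> c = b)].

Definition simple_lattice (L : seq pt) : Prop := forall a b, ~ cut_edge L a b.

Definition coversL (L : seq pt) (a b : pt) : bool :=
  [&& a \in L, b \in L, lt2 a b & ~~ has (fun c => lt2 a c && lt2 c b) L].

Definition is_c0 (L : seq pt) (top : pt) (d : nat) (x : nat -> pt) : Prop :=
  [/\ x 0 = (0, 0), x d.+1 = top,
      (forall t, t <= d.+1 -> x t \in L),
      (forall t, t <= d -> coversL L (x t) (x t.+1))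
    & (forall p, p \in L -> (exists2 t, t <= d.+1 & (x t).1 = p.1) ->
         exists2 t, t <= d.+1 & ((x t).1 = p.1 /\ p.2 <= (x t).2))].

Definition is_lambda (L : seq pt) (d : nat) (x : nat -> pt)
    (lam : pt -> pt -> nat) : Prop :=
  forall t, t <= d ->
    [/\ lam (x t) (x t.+1) = t.+1,
        ((x t.+1).1 = (x t).1.+1 ->
           forall j, ((x t).1, j) \in L -> ((x t.+1).1, j) \in L ->
             lam ((x t).1, j) ((x t.+1).1, j) = t.+1)
      & ((x t.+1).2 = (x t).2.+1 ->
           forall i, (i, (x t).2) \in L -> (i, (x t.+1).2) \in L ->
             lam (i, (x t).2) (i, (x t.+1).2) = t.+1)].

(* label tuple of the chain a = z_0 -> z_1 -> ... (z = [:: z_1; ...; z_k]) *)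
Definition chain_labels (lam : pt -> pt -> nat) (a : pt) (z : seq pt) : seq nat :=
  pairmap lam a z.

Fixpoint lex_lt (s t : seq nat) : bool :=
  match s, t with
  | [::], [::] => false
  | [::], _ :: _ => true
  | _ :: _, [::] => false
  | a :: s', b :: t' => (a < b) || ((a == b) && lex_lt s' t')
  end.

Definition max_chain (L : seq pt) (a b : pt) (z : seq pt) : bool :=
  path (coversL L) a z && (last a z == b).

Definition EL_labeling (L : seq pt) (lam : pt -> pt -> nat) : Prop :=
  forall a b, a \in L -> b \in L -> le2 a b ->
    exists z0, [/\ max_chain L a b z0,
                   sorted leq (chain_labels lam a z0),
                   (forall z, max_chain L a b z ->
                      sorted leq (chain_labels lam a z) -> z = z0)
                 & (forall z, max_chain L a b z -> z != z0 ->
                      lex_lt (chain_labels lam a z0) (chain_labels lam a z))].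

From mathcomp Require Import all_boot all_order.
From mathcomp Require Import zify.
Set Implicit Arguments. Unset Strict Implicit.

(* The increasing chain from p to b is the greedy one: step up whenever the
   point above p is in L and not higher than b, otherwise step right.
   Two comparisons of labels make it work.  Since c_0 is the upper boundary of
   every column it meets, a vertical edge at height j gets a smaller label
   than every horizontal edge leaving a column that reaches height j+1: c_0
   climbs past height j before it leaves that column.  And if (i,j) -> (i+1,j)
   is an edge with (i,j+1) outside L, then c_0 leaves column i before climbing
   past height j, as otherwise the join of (i,j) with a point of c_0 would put
   (i,j+1) in L.  The first comparison shows that a chain starting with a
   horizontal step where a vertical one was possible cannot be increasing
   (it must climb later) and is lexicographically larger than the greedy
   chain; together with the second one it shows that the greedy chain is
   increasing. *)

Lemma unit_stepP (a b : pt) :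
  unit_step a b -> b = (a.1.+1, a.2) \/ b = (a.1, a.2.+1).
Proof. by case/orP=> /eqP ->; [left|right]. Qed.

Lemma unit_path_last (a : pt) (s : seq pt) : path unit_step a s ->
  rk (last a s) = rk a + size s /\ le2 a (last a s).
Proof.
elim: s a => [|c s IH] a /=; first by rewrite addn0 /le2 !leqnn.
case/andP=> /unit_stepP Hc /IH [].
by rewrite /rk /le2; case: Hc => -> /=; case: (last _ _) => u v /= ? /andP[? ?];
  (split; [lia | apply/andP; split; lia]).
Qed.

Lemma unit_step_rk (a b : pt) : unit_step a b -> rk b = (rk a).+1.
Proof. by case/unit_stepP=> ->; rewrite /rk /=; lia. Qed.

Lemma unit_step_le2 (a b : pt) : unit_step a b -> le2 a b.
Proof. by case/unit_stepP=> ->; rewrite /le2 /= !leqnn ?leqnSn. Qed.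

Lemma le2_rk_lt (a c : pt) : le2 a c -> a <> c -> rk a < rk c.
Proof.
case: a c => u v [p q]; rewrite /le2 /rk /= => /andP[h1 h2] hne.
suff : u < p \/ v < q by lia.
case: (ltnP u p) => hu; first by left.
case: (ltnP v q) => hv; first by right.
by case: hne; congr pair; apply/eqP; rewrite eqn_leq ?h1 ?h2.
Qed.

Lemma exists_crossing (f : nat -> nat) i n : f 0 <= i -> i < f n ->
  exists2 t, t < n & f t <= i < f t.+1.
Proof.
elim: n => [|n IH] h0 hn; first lia.
case: (ltnP i (f n)) => h; last by exists n => //; apply/andP.
by have [t ht ht'] := IH h0 h; exists t => //; lia.
Qed.

Section Covers.
Variable L : seq pt.
Hypothesis HL : planar_distr_lattice L.

Lemma unit_step_covers a b : a \in L -> b \in L -> unit_step a b -> coversL L a b.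
Proof.
move=> aL bL ab; have Hr := unit_step_rk ab.
rewrite /coversL aL bL /lt2 unit_step_le2 //=; apply/andP; split.
  by apply/eqP=> E; rewrite E in Hr; lia.
apply/hasPn => c _; apply/negP => /andP[] /andP[h1 /eqP h2] /andP[h3 /eqP h4].
have := le2_rk_lt h1 h2; have := le2_rk_lt h3 h4; lia.
Qed.

Lemma covers_unit_step a b : coversL L a b -> unit_step a b.
Proof.
case/and4P=> aL bL /andP[ab /eqP aNb] /hasPn Hn.
case: HL => _ _ _ /(_ a b aL bL ab) [[|c s] []]; first by move=> _ /= E; case: aNb.
move=> /= /andP[ac Hp] Hlast /andP[cL _].
case: s Hp Hlast => [|e s] Hp Hlast; first by rewrite -Hlast.
have [Hr Hl] := unit_path_last Hp; rewrite Hlast /= in Hr Hl.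
have Hac := unit_step_rk ac.
have := Hn c cL; rewrite /lt2 Hl unit_step_le2 //=.
have -> : a != c by apply/eqP=> E; rewrite E in Hac; lia.
have -> : c != b by apply/eqP=> E; rewrite E in Hr; lia.
by [].
Qed.

Lemma covers_path_le p z : path (coversL L) p z -> le2 p (last p z).
Proof.
by move=> Hp; apply: (unit_path_last (sub_path covers_unit_step Hp)).2.
Qed.

Lemma max_chain_nil p z : max_chain L p p z -> z = [::].
Proof.
case/andP=> /(sub_path covers_unit_step)/unit_path_last[Hr _] /eqP Hl.
by move: Hr; rewrite Hl; case: z {Hl} => //= c z; lia.
Qed.

End Covers.

Lemma max_chain_cons L p b q z :
  max_chain L p b (q :: z) = coversL L p q && max_chain L q b z.
Proof. by rewrite /max_chain /= andbA. Qed.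

Section Labels.
Variables (L : seq pt) (top : pt) (d : nat) (x : nat -> pt) (lam : pt -> pt -> nat).
Hypothesis HL : planar_distr_lattice L.
Hypothesis Hle : forall p, p \in L -> le2 p top.
Hypothesis Hc0 : is_c0 L top d x.
Hypothesis Hlam : is_lambda L d x lam.

Lemma c0_unit_step t : t <= d -> unit_step (x t) (x t.+1).
Proof. by move=> ht; case: Hc0 => _ _ _ /(_ t ht) /(covers_unit_step HL). Qed.

Lemma c0_le s t : s <= t -> t <= d.+1 -> le2 (x s) (x t).
Proof.
rewrite /le2; elim: t => [|t IH]; first by rewrite leqn0 => /eqP -> _; rewrite !leqnn.
rewrite leq_eqVlt => /orP [/eqP -> _|hst ht]; first by rewrite !leqnn.
have /andP[h1 h2] := IH hst (ltnW ht).
by case: (unit_stepP (c0_unit_step ht)) => -> /=; apply/andP; split; lia.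
Qed.

Lemma label_horizontal i j : (i, j) \in L -> (i.+1, j) \in L ->
  exists t, [/\ t <= d, (x t).1 = i, x t.+1 = (i.+1, (x t).2)
              & lam (i, j) (i.+1, j) = t.+1].
Proof.
move=> h1 h2; have [x0 xtop _ _ _] := Hc0.
have /andP[hi _] := Hle h2.
have [t ht /andP[ht2 ht3]] : exists2 t, t < d.+1 & (x t).1 <= i < (x t.+1).1.
  by apply: (@exists_crossing (fun t => (x t).1)); rewrite ?x0 ?xtop.
have [E|E] := unit_stepP (c0_unit_step ht); rewrite E /= in ht3; last lia.
have Ei : (x t).1 = i by lia.
have [_ Hh _] := Hlam ht.
exists t; split; rewrite ?E ?Ei //.
by have := Hh; rewrite E Ei => /(_ erefl j h1 h2).
Qed.

Lemma label_vertical i j : (i, j) \in L -> (i, j.+1) \in L ->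
  exists t, [/\ t <= d, (x t).2 = j, x t.+1 = ((x t).1, j.+1)
              & lam (i, j) (i, j.+1) = t.+1].
Proof.
move=> h1 h2; have [x0 xtop _ _ _] := Hc0.
have /andP[_ hj] := Hle h2.
have [t ht /andP[ht2 ht3]] : exists2 t, t < d.+1 & (x t).2 <= j < (x t.+1).2.
  by apply: (@exists_crossing (fun t => (x t).2)); rewrite ?x0 ?xtop.
have [E|E] := unit_stepP (c0_unit_step ht); rewrite E /= in ht3; first lia.
have Ej : (x t).2 = j by lia.
have [_ _ Hv] := Hlam ht.
exists t; split; rewrite ?E ?Ej //.
by have := Hv; rewrite E Ej => /(_ erefl i h1 h2).
Qed.

Lemma label_horizontal_lt i j i' j' :
  (i, j) \in L -> (i.+1, j) \in L -> (i', j') \in L -> (i'.+1, j') \in L ->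
  i < i' -> lam (i, j) (i.+1, j) < lam (i', j') (i'.+1, j').
Proof.
move=> h1 h2 h3 h4 ii'.
have [t [ht E _ ->]] := label_horizontal h1 h2.
have [t' [_ E' _ ->]] := label_horizontal h3 h4.
case: (ltnP t t') => // h; have /andP[m _] := c0_le h (leqW ht); lia.
Qed.

Lemma label_vertical_lt i j i' j' :
  (i, j) \in L -> (i, j.+1) \in L -> (i', j') \in L -> (i', j'.+1) \in L ->
  j < j' -> lam (i, j) (i, j.+1) < lam (i', j') (i', j'.+1).
Proof.
move=> h1 h2 h3 h4 jj'.
have [t [ht E _ ->]] := label_vertical h1 h2.
have [t' [_ E' _ ->]] := label_vertical h3 h4.
case: (ltnP t t') => // h; have /andP[_ m] := c0_le h (leqW ht); lia.
Qed.

Lemma label_vertical_lt_horizontal i j k l :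
  (i, j.+1) \in L -> (k, j) \in L -> (k, j.+1) \in L ->
  (i, l) \in L -> (i.+1, l) \in L ->
  lam (k, j) (k, j.+1) < lam (i, l) (i.+1, l).
Proof.
move=> h0 h1 h2 h3 h4.
have [s [hs E _ ->]] := label_vertical h1 h2.
have [t [ht Ft F ->]] := label_horizontal h3 h4.
case: (ltnP s t) => // ts.
have [_ _ _ _ Hcol] := Hc0.
have [|t' ht' [/= G1 G2]] := Hcol _ h0; first by exists t => //; apply: leqW.
case: (ltnP t t') => tt'.
  by have /andP[m _] := c0_le tt' ht'; rewrite F /= in m; lia.
by have /andP[_ m] := c0_le (leq_trans tt' ts) (leqW hs); rewrite E /= in m; lia.
Qed.

Lemma label_horizontal_lt_vertical i j k :
  (i, j) \in L -> (i.+1, j) \in L -> (i, j.+1) \notin L ->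
  (k, j) \in L -> (k, j.+1) \in L ->
  lam (i, j) (i.+1, j) < lam (k, j) (k, j.+1).
Proof.
move=> h1 h2 h0 h3 h4.
have [t [ht F1 F2 ->]] := label_horizontal h1 h2.
have [s [hs _ E ->]] := label_vertical h3 h4.
case: (ltnP t s) => // st; rewrite leq_eqVlt in st.
case/orP: st => [/eqP st | st].
  by move: F1 F2; rewrite -st E => F1 []; lia.
have /andP[m _] := c0_le st (leqW ht); rewrite F1 E /= in m.
have [_ _ xL _ _] := Hc0; have [_ _ Hjoin _] := HL.
have := Hjoin _ _ h1 (xL s.+1 hs); rewrite E /=.
by rewrite (maxn_idPl m) (maxn_idPr (leqnSn j)) (negbTE h0).
Qed.

Lemma covers_path_vertical_label q z j : path (coversL L) q z ->
  q.2 <= j < (last q z).2 ->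
  exists k, [/\ (k, j) \in L, (k, j.+1) \in L
              & lam (k, j) (k, j.+1) \in chain_labels lam q z].
Proof.
elim: z q => [|r z IH] q /=; first lia.
case/andP=> qr Hp Hj; have [qL rL _ _] := and4P qr.
suff : (q.2 = j /\ r = (q.1, j.+1)) \/
    exists k, [/\ (k, j) \in L, (k, j.+1) \in L
                & lam (k, j) (k, j.+1) \in chain_labels lam r z].
  case=> [[Ej Er]|[k [k1 k2 k3]]]; last by exists k; rewrite in_cons k3 orbT.
  by exists q.1; rewrite -Er -Ej -surjective_pairing in_cons qL rL eqxx.
case: (unit_stepP (covers_unit_step HL qr)) => Er.
  by right; apply: (IH r Hp); rewrite {1}Er.
case: (ltnP q.2 j) => hq; last by left; split; [lia | rewrite Er; congr pair; lia].
by right; apply: (IH r Hp); rewrite {1}Er /=; lia.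
Qed.

Section Greedy.
Variable b : pt.
Hypothesis bL : b \in L.

Definition greedy_next (p : pt) : pt :=
  if ((p.1, p.2.+1) \in L) && (p.2 < b.2) then (p.1, p.2.+1) else (p.1.+1, p.2).

Lemma greedy_nextE i j :
  (((i, j.+1) \in L) && (j < b.2) /\ greedy_next (i, j) = (i, j.+1)) \/
  (~~ (((i, j.+1) \in L) && (j < b.2)) /\ greedy_next (i, j) = (i.+1, j)).
Proof. by rewrite /greedy_next /=; case: ifP => h; [left|right]. Qed.

Lemma greedy_next_spec p : p \in L -> le2 p b -> p != b ->
  [/\ greedy_next p \in L, le2 (greedy_next p) b & unit_step p (greedy_next p)].
Proof.
move=> pL pb /eqP pNb.
case: HL => _ _ _ /(_ p b pL bL pb) [[|c s] []]; first by move=> _ /= E; case: pNb.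
move=> /= /andP[pc Hp] Hlast /andP[cL _].
have [_] := unit_path_last Hp; rewrite Hlast.
move: pb; rewrite /le2 /unit_step.
case: p pL {pNb Hp Hlast pc} (unit_stepP pc) => i j pL /= Ec /andP[b1 b2] /andP[c1 c2].
case: (greedy_nextE i j) => -[g ->]; first by case/andP: g => gL gb; rewrite gL /= gb b1 eqxx orbT.
case: Ec => Ec; rewrite Ec /= in c1 c2 cL *; first by rewrite cL c1 b2 eqxx.
by move: g; rewrite cL /=; lia.
Qed.

Lemma greedy_next_sorted p : p \in L -> greedy_next p \in L ->
  greedy_next (greedy_next p) \in L ->
  lam p (greedy_next p) <= lam (greedy_next p) (greedy_next (greedy_next p)).
Proof.
case: p => i j pL.
case: (greedy_nextE i j) => -[g1 ->].
  case: (greedy_nextE i j.+1) => -[_ ->] qL rL; apply: ltnW.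
    exact: label_vertical_lt.
  exact: label_vertical_lt_horizontal.
case: (greedy_nextE i.+1 j) => -[g2 ->] qL rL; apply: ltnW.
  apply: label_horizontal_lt_vertical => //; apply/negP => h.
  by case/andP: g2 => _ jb; rewrite h jb in g1.
exact: label_horizontal_lt.
Qed.

Lemma covers_not_greedy_next p q : coversL L p q -> le2 q b -> q != greedy_next p ->
  [/\ (p.1, p.2.+1) \in L, p.2 < b.2 & q = (p.1.+1, p.2)].
Proof.
move=> pq; have [_ qL _ _] := and4P pq; move: qL.
case: p pq => i j pq /=.
case: (unit_stepP (covers_unit_step HL pq)) => /= -> qL /andP[_ qb];
  case: (greedy_nextE i j) => -[g ->]; rewrite ?eqxx //.
- by case/andP: g.
- by move: g qb; rewrite qL /=; lia.
Qed.

Lemma sorted_chain_head p q z : max_chain L p b (q :: z) ->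
  sorted leq (chain_labels lam p (q :: z)) -> q = greedy_next p.
Proof.
rewrite max_chain_cons => /andP[pq /andP[Hp /eqP Hl]] Hs.
have qb : le2 q b by rewrite -Hl; apply: covers_path_le Hp.
have [//|/(covers_not_greedy_next pq qb) [vL pb Eq]] := eqVneq q (greedy_next p).
have [|k [k1 k2 kz]] := covers_path_vertical_label (j := p.2) Hp.
  by rewrite Hl Eq /= leqnn.
have := allP (order_path_min leq_trans Hs) _ kz.
have [pL qL _ _] := and4P pq; rewrite Eq in qL.
have pL' : (p.1, p.2) \in L by rewrite -surjective_pairing.
have := label_vertical_lt_horizontal vL k1 k2 pL' qL.
by rewrite -surjective_pairing -Eq => lt; rewrite leqNgt lt.
Qed.

Lemma lex_chain_head p q z : max_chain L p b (q :: z) -> q != greedy_next p ->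
  lam p (greedy_next p) < lam p q.
Proof.
rewrite max_chain_cons => /andP[pq /andP[Hp /eqP Hl]] qNg.
have qb : le2 q b by rewrite -Hl; apply: covers_path_le Hp.
have [vL pb Eq] := covers_not_greedy_next pq qb qNg.
have [pL qL _ _] := and4P pq; rewrite Eq in qL.
have pL' : (p.1, p.2) \in L by rewrite -surjective_pairing.
have := label_vertical_lt_horizontal vL pL' vL pL' qL.
by rewrite /greedy_next vL pb Eq -surjective_pairing.
Qed.

Definition EL_chain (a : pt) (z0 : seq pt) : Prop :=
  [/\ max_chain L a b z0, sorted leq (chain_labels lam a z0),
      (forall z, max_chain L a b z -> sorted leq (chain_labels lam a z) -> z = z0)
    & (forall z, max_chain L a b z -> z != z0 ->
         lex_lt (chain_labels lam a z0) (chain_labels lam a z))].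

Lemma EL_chain_refl : EL_chain b [::].
Proof.
split; first by rewrite /max_chain /= eqxx.
- by [].
- by move=> z /(max_chain_nil HL).
- by move=> z /(max_chain_nil HL) ->; rewrite eqxx.
Qed.

Lemma EL_chain_cons p z0 : p \in L -> le2 p b -> p != b ->
  EL_chain (greedy_next p) z0 -> EL_chain p (greedy_next p :: z0).
Proof.
move=> pL pb pNb [Hm Hs Hu Hlex]; set q := greedy_next p in Hm Hs Hu Hlex *.
have [qL qb pq] := greedy_next_spec pL pb pNb.
have Hc : coversL L p q by apply: unit_step_covers.
split.
- by rewrite max_chain_cons Hc.
- case: z0 Hm Hs {Hu Hlex} => [//|r z1] Hm Hs.
  have qNb : q != b by apply/eqP=> Eqb; move: Hm; rewrite Eqb => /(max_chain_nil HL).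
  rewrite /chain_labels /= in Hs *; rewrite Hs andbT.
  have -> := sorted_chain_head Hm Hs.
  have [rL _ _] := greedy_next_spec qL qb qNb.
  by apply: greedy_next_sorted.
- case=> [/andP[_ /= /eqP Epb] _|q' z]; first by rewrite Epb eqxx in pNb.
  move=> Hz Hsz; have Eq := sorted_chain_head Hz Hsz.
  move: Hz Hsz; rewrite max_chain_cons Eq => /andP[_ Hz] /path_sorted Hsz.
  by rewrite (Hu _ Hz Hsz).
- case=> [/andP[_ /= /eqP Epb] _|q' z]; first by rewrite Epb eqxx in pNb.
  move=> Hz zNz0; have [Eq|qNg] := eqVneq q' q.
    move: Hz zNz0; rewrite max_chain_cons Eq => /andP[_ Hz] zNz0.
    rewrite /= ltnn eqxx /=; apply: Hlex Hz _.
    by apply: contra zNz0 => /eqP ->.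
  by rewrite /= (lex_chain_head Hz qNg).
Qed.

Lemma EL_chain_exists p : p \in L -> le2 p b -> exists z0, EL_chain p z0.
Proof.
move Hn: (rk b - rk p) => n; elim: n p Hn => [|n IH] p Hn pL pb;
  have [->|pNb] := eqVneq p b; try by exists [::]; apply: EL_chain_refl.
  by have := le2_rk_lt pb (elimN eqP pNb); lia.
have [qL qb pq] := greedy_next_spec pL pb pNb.
have [|z0 Hz0] := IH (greedy_next p) _ qL qb; first by have := unit_step_rk pq; lia.
by exists (greedy_next p :: z0); apply: EL_chain_cons.
Qed.

End Greedy.
End Labels.

Theorem proposition6 (L : seq pt) (top : pt) (d : nat)
    (x : nat -> pt) (lam : pt -> pt -> nat) :
  planar_distr_lattice L ->
  simple_lattice L ->
  top \in L -> (forall p, p \in L -> le2 p top) ->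
  rk top = d.+1 ->
  is_c0 L top d x ->
  is_lambda L d x lam ->
  EL_labeling L lam.
Proof.
move=> HL _ _ Hle _ Hc0 Hlam a b aL bL ab.
by have [z0] := EL_chain_exists HL Hle Hc0 Hlam bL aL ab; exists z0.
Qed.
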